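(* Let $c_1>0$, $c_2>0$ and $k\in\mathbb{R}\setminus\{0\}$, and consider the system on $\mathbb{R}^3$ $$\dot z_1=\frac1{c_2}z_2z_3,\qquad \dot z_2=-\frac1{c_1}z_1z_3,\qquad \dot z_3=-\frac{k}{c_1}z_1 .$$ Let $H>0$ be a constant. Then the solution of this system restricted to the constant level surface $$z_1^2+\frac{c_1}{c_2}z_2^2=2H$$ is $$z_1(t)=\sqrt{2H}\cos\theta(t),\qquad z_2(t)=\sqrt{\frac{c_2}{c_1}}\sqrt{2H}\sin\theta(t),\qquad z_3(t)=-\sqrt{c_1c_2}\,\dot\theta(t),$$ where $\theta(t)$ is a solution of the pendulum equation $$\ddot\theta(t)=\frac{k}{c_1^2}\sqrt{\frac{c_1}{c_2}}\sqrt{2H}\cos\theta(t).$$ *)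

From Stdlib Require Import Reals.
From Coquelicot Require Import Coquelicot.

(** On the level surface, [(z1, z2)] rescaled by [sqrt (2 H)] and
    [sqrt (c2 / c1) * sqrt (2 H)] moves on the unit circle with angular
    velocity [w = - z3 / sqrt (c1 c2)].  Integrating [w] from a polar angle of
    the initial point gives [theta]; the squared distance from the rescaled
    point to [(cos theta, sin theta)] has zero derivative, so the point is
    always [(cos theta, sin theta)].  Then [theta'' = w'] is proportional to
    [z1], i.e. to [cos theta], which is the pendulum equation. *)

From Stdlib Require Import Reals Lra Psatz.
From Coquelicot Require Import Coquelicot.
Open Scope R_scope.

Lemma is_derive_scal_eq (f : R -> R) (a x df l : R) :
  is_derive f x df -> l = a * df -> is_derive (fun t => a * f t) x l.
Proof. intros Hf ->; exact (is_derive_scal f x a df Hf). Qed.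

Lemma is_derive_zero_const (F : R -> R) :
  (forall t, is_derive F t 0) -> forall s t, F s = F t.
Proof.
intros HF s t.
destruct (Rtotal_order s t) as [Hst | [-> | Hts]].
- apply eq_is_derive; [intros; apply HF | exact Hst].
- reflexivity.
- symmetry; apply eq_is_derive; [intros; apply HF | exact Hts].
Qed.

Lemma is_derive_RInt_continuous (f : R -> R) (a : R) :
  (forall x, continuous f x) -> forall t, is_derive (fun t => RInt f a t) t (f t).
Proof.
intros Hf t.
apply is_derive_RInt with a; [|apply Hf].
exists (mkposreal 1 Rlt_0_1); intros y _.
apply RInt_correct, ex_RInt_continuous; intros; apply Hf.
Qed.

Lemma unit_circle_polar_angle (u v : R) :
  u ^ 2 + v ^ 2 = 1 -> exists a, cos a = u /\ sin a = v.
Proof.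
intros Huv.
assert (Hu : -1 <= u <= 1) by nra.
assert (Hsin : sqrt (1 - u²) = Rabs v).
{ rewrite <- sqrt_Rsqr_abs; f_equal; unfold Rsqr; nra. }
destruct (Rle_dec 0 v) as [Hv | Hv].
- exists (acos u); rewrite cos_acos, sin_acos, Hsin by exact Hu.
  split; [reflexivity | apply Rabs_right; lra].
- exists (- acos u); rewrite cos_neg, sin_neg, cos_acos, sin_acos, Hsin by exact Hu.
  split; [reflexivity | rewrite Rabs_left; lra].
Qed.

Section Unit_circle_rotation.

Variables (u v w theta : R -> R).
Hypotheses (du : forall t, is_derive u t (- v t * w t))
  (dv : forall t, is_derive v t (u t * w t))
  (dtheta : forall t, is_derive theta t (w t)).

Lemma rotation_deviation_derive (t : R) :
  is_derive (fun t => (u t - cos (theta t)) ^ 2 + (v t - sin (theta t)) ^ 2) t 0.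
Proof.
auto_derive.
- repeat split; eexists; eauto.
- change (Derive (fun x => u x) t) with (Derive u t).
  change (Derive (fun x => v x) t) with (Derive v t).
  change (Derive (fun x => theta x) t) with (Derive theta t).
  rewrite (is_derive_unique _ _ _ (du t)), (is_derive_unique _ _ _ (dv t)),
    (is_derive_unique _ _ _ (dtheta t)).
  ring.
Qed.

Lemma rotation_follows_angle (t0 : R) :
  u t0 = cos (theta t0) -> v t0 = sin (theta t0) ->
  forall t, u t = cos (theta t) /\ v t = sin (theta t).
Proof.
intros Hu0 Hv0 t.
pose proof (is_derive_zero_const _ rotation_deviation_derive t t0) as Hdev.
cbv beta in Hdev.
rewrite Hu0, Hv0, !Rminus_diag, <- !Rsqr_pow2, Rsqr_0, Rplus_0_r in Hdev.
apply Rplus_sqr_eq_0 in Hdev; lra.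
Qed.

End Unit_circle_rotation.

Lemma unit_circle_angle_lift (u v w : R -> R) :
  (forall t, continuous w t) ->
  (forall t, is_derive u t (- v t * w t)) ->
  (forall t, is_derive v t (u t * w t)) ->
  u 0 ^ 2 + v 0 ^ 2 = 1 ->
  exists theta, (forall t, is_derive theta t (w t)) /\
    forall t, u t = cos (theta t) /\ v t = sin (theta t).
Proof.
intros Hw du dv Huv.
destruct (unit_circle_polar_angle _ _ Huv) as [a [Ha Hb]].
set (theta := fun t => a + RInt w 0 t).
assert (dtheta : forall t, is_derive theta t (w t)).
{ intros t.
  pose proof (@is_derive_plus R_AbsRing R_NormedModule
    (fun _ => a) (fun t => RInt w 0 t) t zero (w t) (is_derive_const a t) (is_derive_RInt_continuous _ _ Hw t)) as Hsum.
  rewrite plus_zero_l in Hsum; exact Hsum. }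
assert (Htheta0 : theta 0 = a) by (unfold theta; rewrite RInt_point; apply Rplus_0_r).
exists theta; split; [exact dtheta|].
apply (rotation_follows_angle u v w theta du dv dtheta 0); rewrite Htheta0; auto.
Qed.

Lemma sqrt_div_eq_div_sqrt_mul (a b : R) : 0 < a -> 0 < b -> sqrt (b / a) = b / sqrt (a * b).
Proof.
intros Ha Hb.
assert (Hab : 0 < sqrt (a * b)) by (apply sqrt_lt_R0; nra).
apply (Rmult_eq_reg_r (sqrt (a * b))); [|lra].
rewrite <- sqrt_mult_alt by (apply Rlt_le, Rdiv_lt_0_compat; assumption).
replace (b / a * (a * b)) with (b * b) by (field; lra).
rewrite sqrt_square by lra; field; lra.
Qed.

Section Level_surface.

Variables (c1 c2 k H : R) (z1 z2 z3 : R -> R).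
Hypotheses (hc1 : 0 < c1) (hc2 : 0 < c2) (hH : 0 < H)
  (dz1 : forall t, is_derive z1 t (/ c2 * z2 t * z3 t))
  (dz2 : forall t, is_derive z2 t (- (/ c1 * z1 t * z3 t)))
  (dz3 : forall t, is_derive z3 t (- (k / c1 * z1 t)))
  (level : forall t, z1 t ^ 2 + c1 / c2 * z2 t ^ 2 = 2 * H).

Let r := sqrt (2 * H).
Let s := sqrt (c2 / c1).
Let q := sqrt (c1 * c2).

Let r_pos : 0 < r. Proof. apply sqrt_lt_R0; lra. Qed.
Let q_pos : 0 < q. Proof. apply sqrt_lt_R0; nra. Qed.
Let r_sq : r * r = 2 * H. Proof. apply sqrt_sqrt; lra. Qed.
Let q_sq : q * q = c1 * c2. Proof. apply sqrt_sqrt; nra. Qed.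
Let s_eq : s = c2 / q. Proof. exact (sqrt_div_eq_div_sqrt_mul c1 c2 hc1 hc2). Qed.

Let u t := / r * z1 t.
Let v t := / (s * r) * z2 t.
Let w t := - / q * z3 t.

Let u_derive t : is_derive u t (- v t * w t).
Proof.
apply (is_derive_scal_eq _ _ _ _ _ (dz1 t)); unfold v, w.
rewrite s_eq; field; lra.
Qed.

Let v_derive t : is_derive v t (u t * w t).
Proof.
apply (is_derive_scal_eq _ _ _ _ _ (dz2 t)); unfold u, w.
replace (/ c1) with (c2 / (q * q)) by (rewrite q_sq; field; lra).
rewrite s_eq; field; lra.
Qed.

Let w_continuous t : continuous w t.
Proof.
apply (@ex_derive_continuous R_AbsRing R_NormedModule).
eexists; apply is_derive_scal, dz3.
Qed.

Let uv_unit : u 0 ^ 2 + v 0 ^ 2 = 1.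
Proof.
unfold u, v; rewrite s_eq.
replace 1 with ((z1 0 ^ 2 + c1 / c2 * z2 0 ^ 2) / (2 * H)) by (rewrite level; field; lra).
rewrite <- r_sq.
replace (c1 / c2) with (q * q / (c2 * c2)) by (rewrite q_sq; field; lra).
field; lra.
Qed.

Lemma level_surface_angle :
  exists theta, (forall t, is_derive theta t (w t)) /\
    forall t, z1 t = r * cos (theta t) /\ z2 t = s * r * sin (theta t).
Proof.
destruct (unit_circle_angle_lift u v w w_continuous u_derive v_derive uv_unit)
  as [theta [dtheta Htheta]].
exists theta; split; [exact dtheta|].
intros t; destruct (Htheta t) as [<- <-]; unfold u, v.
rewrite s_eq; split; field; lra.
Qed.

Lemma angular_velocity_derive t :
  is_derive w t (k / c1 ^ 2 * sqrt (c1 / c2) * z1 t).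
Proof.
apply (is_derive_scal_eq _ _ _ _ _ (dz3 t)).
rewrite (sqrt_div_eq_div_sqrt_mul c2 c1 hc2 hc1), (Rmult_comm c2 c1); fold q.
field; lra.
Qed.

End Level_surface.

Theorem proposition5p3 (c1 c2 k H : R) (z1 z2 z3 : R -> R) :
  0 < c1 -> 0 < c2 -> k <> 0 -> 0 < H ->
  (forall t, is_derive z1 t (/ c2 * z2 t * z3 t)) ->
  (forall t, is_derive z2 t (- (/ c1 * z1 t * z3 t))) ->
  (forall t, is_derive z3 t (- (k / c1 * z1 t))) ->
  (forall t, z1 t ^ 2 + c1 / c2 * z2 t ^ 2 = 2 * H) ->
  exists theta dtheta : R -> R,
    (forall t, is_derive theta t (dtheta t)) /\
    (forall t, is_derive dtheta t
                 (k / c1 ^ 2 * sqrt (c1 / c2) * sqrt (2 * H) * cos (theta t))) /\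
    (forall t,
        z1 t = sqrt (2 * H) * cos (theta t) /\
        z2 t = sqrt (c2 / c1) * sqrt (2 * H) * sin (theta t) /\
        z3 t = - (sqrt (c1 * c2) * dtheta t)).
Proof.
intros hc1 hc2 _ hH dz1 dz2 dz3 level.
destruct (level_surface_angle _ _ _ _ _ _ _ hc1 hc2 hH dz1 dz2 dz3 level)
  as [theta [dtheta Hz]].
exists theta, (fun t => - / sqrt (c1 * c2) * z3 t); split; [exact dtheta|]; split.
- intros t; rewrite Rmult_assoc, <- (proj1 (Hz t)).
  exact (angular_velocity_derive _ _ _ _ _ hc1 hc2 dz3 t).
- intros t; destruct (Hz t) as [Hz1 Hz2]; repeat split; try assumption.
  assert (Hq : 0 < sqrt (c1 * c2)) by (apply sqrt_lt_R0; nra).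
  field; lra.
Qed.
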